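(* Let $\Lambda\subseteq\mathbb Z^D$ be a lattice that induces a lattice tiling of each of two shapes $\mathcal S$ and $\mathcal S'$, and let $\delta$ be a nonzero ternary vector. Then $(\Lambda,\mathcal S,\delta)$ defines a folding if and only if $(\Lambda,\mathcal S',\delta)$ defines a folding.
   Context: Let $D\ge 1$. A shape is a finite nonempty set $\mathcal S\subset\mathbb Z^D$ containing the origin; the origin is its distinguished center point. A lattice is a set $\Lambda=\{\sum_{j=1}^D u_jv_j : u_1,\dots,u_D\in\mathbb Z\}$ for linearly independent $v_1,\dots,v_D\in\mathbb Z^D$. $\Lambda$ induces a lattice tiling of $\mathcal S$ if the translates $\mathcal S+\lambda$, $\lambda\in\Lambda$, are pairwise disjoint and cover $\mathbb Z^D$. The translate $\mathcal S+\lambda$ is called the copy of $\mathcal S$ with center $\lambda$. For $x\in\mathbb Z^D$, $c(x)$ denotes the unique $\lambda\in\Lambda$ with $x\in\mathcal S+\lambda$. A ternary vector (direction) is a nonzero $\delta\in\{-1,0,+1\}^D$. The folded-row of $(\Lambda,\mathcal S,\delta)$ is the sequence $p_0,p_1,p_2,\dots$ defined by $p_0=0$ and $p_{k+1}=(p_k+\delta)-c(p_k+\delta)$. Equivalently, $p_{k+1}=p_k+\delta$ if $p_k+\delta\in\mathcal S$; otherwise $p_{k+1}$ is $p_k+\delta$ minus the center of the copy of $\mathcal S$ containing $p_k+\delta$. The triple $(\Lambda,\mathcal S,\delta)$ defines a folding if every element of $\mathcal S$ occurs in its folded-row. *)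

From HB Require Import structures.
From mathcomp Require Import all_boot all_order all_algebra.
Set Implicit Arguments. Unset Strict Implicit. Unset Printing Implicit Defensive.
Import Order.TTheory GRing.Theory Num.Theory.
Local Open Scope ring_scope.

(* A shape: a finite (given by a list) subset of Z^D containing the origin
   (hence nonempty). *)
Definition is_shape (D : nat) (S : seq 'rV[int]_D) : Prop := (0 : 'rV[int]_D) \in S.

(* A lattice is given by a D x D integer matrix B whose rows v_1..v_D are
   linearly independent; Lambda = { sum_j u_j v_j : u in Z^D } = { u *m B }. *)
Definition lin_indep_rows (D : nat) (B : 'M[int]_D) : Prop :=
  forall u : 'rV[int]_D, u *m B = 0 -> u = 0.

Definition in_lattice (D : nat) (B : 'M[int]_D) (x : 'rV[int]_D) : Prop :=
  exists u : 'rV[int]_D, x = u *m B.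

Definition in_copy (D : nat) (S : seq 'rV[int]_D) (lam x : 'rV[int]_D) : bool :=
  (x - lam) \in S.

Definition lattice_tiling (D : nat) (B : 'M[int]_D) (S : seq 'rV[int]_D) : Prop :=
  (forall x : 'rV[int]_D, exists lam, in_lattice B lam /\ in_copy S lam x) /\
  (forall lam lam' x : 'rV[int]_D, in_lattice B lam -> in_lattice B lam' ->
     lam <> lam' -> in_copy S lam x -> in_copy S lam' x -> False).

Definition ternary (D : nat) (delta : 'rV[int]_D) : Prop :=
  delta <> 0 /\ forall i : 'I_D, delta 0 i \in [:: -1; 0; 1].

(* p is the folded-row of (Lambda, S, delta): p_0 = 0 and
   p_{k+1} = (p_k + delta) - c(p_k + delta), where c(y) is the (unique, under
   the tiling hypothesis) lam in Lambda with y in S + lam. *)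
Definition is_folded_row (D : nat) (B : 'M[int]_D) (S : seq 'rV[int]_D)
    (delta : 'rV[int]_D) (p : nat -> 'rV[int]_D) : Prop :=
  p 0%N = 0 /\
  forall k : nat, exists lam, in_lattice B lam /\ in_copy S lam (p k + delta) /\
     p k.+1 = (p k + delta) - lam.

Definition defines_folding (D : nat) (B : 'M[int]_D) (S : seq 'rV[int]_D)
    (delta : 'rV[int]_D) : Prop :=
  forall p : nat -> 'rV[int]_D, is_folded_row B S delta p ->
    forall s, s \in S -> exists k : nat, p k = s.

From HB Require Import structures.
From mathcomp Require Import all_boot all_order all_algebra.
From Stdlib Require Import ClassicalEpsilon.
Import GRing.Theory.
Set Implicit Arguments. Unset Strict Implicit. Unset Printing Implicit Defensive.

(* Write x ~ y when x - y lies in the lattice Lambda.  Two facts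
   about a lattice tiling of a shape S drive the proof:
   - every point is ~ to some element of S (the copies cover Z^D), and
   - distinct elements of S are never ~ (the copies are disjoint).
   A folded-row p of (Lambda, S, delta) stays inside S and satisfies
   p_k ~ k * delta, by induction on k.  Hence, for two shapes tiled by the
   same lattice, the k-th terms of their folded-rows are ~ to each other.
   Now assume (Lambda, S, delta) is a folding and let s' be in S'.  Pick s in S
   with s ~ s' and k with p_k = s (p a folded-row for S, which exists by the
   covering property); then the k-th term of any folded-row for S' is an
   element of S' that is ~ s', so it equals s'.  By symmetry the two folding
   properties are equivalent. *)

Local Open Scope ring_scope.

Section LatticeCongruence.
Variables (D : nat) (B : 'M[int]_D).

Definition lat_congr (x y : 'rV[int]_D) : Prop := in_lattice B (x - y).

Lemma in_lattice0 : in_lattice B 0.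
Proof. by exists 0; rewrite mul0mx. Qed.

Lemma in_latticeB x y : in_lattice B x -> in_lattice B y -> in_lattice B (x - y).
Proof. by move=> [u ->] [v ->]; exists (u - v); rewrite mulmxBl. Qed.

Lemma lat_congr_sym x y : lat_congr x y -> lat_congr y x.
Proof. by move=> hxy; rewrite /lat_congr -opprB -sub0r; apply: in_latticeB in_lattice0 hxy. Qed.

Lemma lat_congr_trans x y z : lat_congr x y -> lat_congr y z -> lat_congr x z.
Proof.
move=> hxy hyz; have := in_latticeB hxy (lat_congr_sym hyz).
by rewrite /lat_congr opprB addrA subrK.
Qed.

Lemma lat_congr_subl x a : in_lattice B a -> lat_congr (x - a) x.
Proof.
move=> ha; rewrite /lat_congr addrAC subrr add0r -sub0r.
exact: in_latticeB in_lattice0 ha.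
Qed.

Lemma lat_congr_addr x y d : lat_congr x y -> lat_congr (x + d) (y + d).
Proof. by rewrite /lat_congr opprD addrA (addrAC x) addrK. Qed.

End LatticeCongruence.

Arguments in_lattice0 {D} B.

Section Tiling.
Variables (D : nat) (B : 'M[int]_D) (S : seq 'rV[int]_D).
Hypothesis tiling : lattice_tiling B S.

Lemma tiling_representative x : exists2 s, s \in S & lat_congr B x s.
Proof.
have [lam [hlam hx]] := tiling.1 x; exists (x - lam) => //.
by rewrite /lat_congr opprB addrC subrK.
Qed.

(* Disjointness: congruent elements of the shape coincide, since
   s1 lies both in S + 0 and in S + (s1 - s2). *)
Lemma tiling_congr_eq s1 s2 : s1 \in S -> s2 \in S -> lat_congr B s1 s2 -> s1 = s2.
Proof.
move=> hs1 hs2 hc; case: (eqVneq s1 s2) => // hne; exfalso.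
have distinct_centers : (0 : 'rV[int]_D) <> s1 - s2.
  by move/esym/eqP; rewrite subr_eq0 (negbTE hne).
have in_copy0 : in_copy S 0 s1 by rewrite /in_copy subr0.
have in_copy12 : in_copy S (s1 - s2) s1 by rewrite /in_copy opprB addrA (addrC s1) addrK.
exact: (tiling.2 0 (s1 - s2) s1 (in_lattice0 B) hc distinct_centers in_copy0 in_copy12).
Qed.

Lemma folded_row_exists delta : exists p, is_folded_row B S delta p.
Proof.
pose center x := proj1_sig (constructive_indefinite_description _ (tiling.1 x)).
have center_spec x : in_lattice B (center x) /\ in_copy S (center x) x :=
  proj2_sig (constructive_indefinite_description _ (tiling.1 x)).
pose step y := y + delta - center (y + delta).
exists (fun k => iter k step 0); split=> // k.
by exists (center (iter k step 0 + delta)); have [? ?] := center_spec (iter k step 0 + delta).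
Qed.

End Tiling.

Section FoldedRow.
Variables (D : nat) (B : 'M[int]_D) (S : seq 'rV[int]_D) (delta : 'rV[int]_D).
Variable p : nat -> 'rV[int]_D.
Hypothesis row : is_folded_row B S delta p.

Lemma folded_row_in_shape : is_shape S -> forall k, p k \in S.
Proof.
move=> hS [|k]; first by rewrite row.1.
by have [lam [_ [hin ->]]] := row.2 k.
Qed.

Lemma folded_row_congr k : lat_congr B (p k) (delta *+ k).
Proof.
elim: k => [|k IH]; first by rewrite row.1 /lat_congr subrr; exact: in_lattice0.
have [lam [hlam [_ ->]]] := row.2 k.
rewrite mulrSr; apply: lat_congr_trans (lat_congr_subl _ hlam) _.
exact: lat_congr_addr.
Qed.

End FoldedRow.

Lemma folding_transfer (D : nat) (B : 'M[int]_D) (S S' : seq 'rV[int]_D)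
    (delta : 'rV[int]_D) :
  is_shape S' -> lattice_tiling B S -> lattice_tiling B S' ->
  defines_folding B S delta -> defines_folding B S' delta.
Proof.
move=> hS' hT hT' hfold p' row' s' hs'.
have [p row] := folded_row_exists hT delta.
have [s hs hs's] := tiling_representative hT s'.
have [k hk] := hfold p row s hs.
exists k; apply: (tiling_congr_eq hT' (folded_row_in_shape row' hS' k) hs').
have hpk : lat_congr B (p' k) s.
  by rewrite -hk; apply: lat_congr_trans (folded_row_congr row' k) _;
     exact: lat_congr_sym (folded_row_congr row k).
exact: lat_congr_trans hpk (lat_congr_sym hs's).
Qed.

Theorem mainTheorem3 (D : nat) (hD : (1 <= D)%N) (B : 'M[int]_D)
  (S S' : seq 'rV[int]_D) (delta : 'rV[int]_D) :
  lin_indep_rows B -> is_shape S -> is_shape S' ->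
  lattice_tiling B S -> lattice_tiling B S' -> ternary delta ->
  (defines_folding B S delta <-> defines_folding B S' delta).
Proof.
move=> _ hS hS' hT hT' _.
by split; apply: folding_transfer.
Qed.
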